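(* Fix $\delta>0$. If $p=p(n)=\omega(n^{-1})$ and $G\sim G(n,p)$, then asymptotically almost surely, for every two disjoint vertex sets $X,Y\subseteq[n]$ with $|X|,|Y|\ge\delta n$, $G$ contains a matching of at least $\delta n/2$ edges each joining a vertex of $X$ to a vertex of $Y$.
   Context: $G(n,p)$ is the Erdős–Rényi random graph on $[n]$ with each edge present independently with probability $p$. ''Asymptotically almost surely'' means with probability tending to $1$ as $n\to\infty$. *)

From HB Require Import structures.
From mathcomp Require Import all_boot all_order all_algebra.
From mathcomp Require Import all_classical all_reals all_analysis.
Set Implicit Arguments. Unset Strict Implicit. Unset Printing Implicit Defensive.
Import Order.TTheory GRing.Theory Num.Theory.
Local Open Scope ring_scope.

(* A graph on [n] = 'I_n is identified with its edge set, a set of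
   2-element subsets of 'I_n. *)
Definition pairs (n : nat) : {set {set 'I_n}} := [set e : {set 'I_n} | #|e| == 2%N].

(* Probability of the event A under G(n,p): each of the #|pairs n| possible
   edges is present independently with probability p. *)
Definition gnp_prob (R : realType) (n : nat) (p : R)
    (A : pred {set {set 'I_n}}) : R :=
  \sum_(E in powerset (pairs n) | A E)
     p ^+ #|E| * (1 - p) ^+ (#|pairs n| - #|E|).

Definition XY_matching (n : nat) (E : {set {set 'I_n}}) (X Y : {set 'I_n})
    (M : {set {set 'I_n}}) : bool :=
  [&& M \subset E,
      [forall e in M, exists x in X, exists y in Y, e == [set x; y]] &
      [forall e in M, forall f in M, (e != f) ==> [disjoint e & f]]].

Definition matching_event (R : realType) (delta : R) (n : nat)
    : pred {set {set 'I_n}} :=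
  fun E => [forall X : {set 'I_n}, forall Y : {set 'I_n},
    ([disjoint X & Y] && (delta * n%:R <= #|X|%:R) && (delta * n%:R <= #|Y|%:R))
    ==> [exists M : {set {set 'I_n}},
          XY_matching E X Y M && (delta * n%:R / 2 <= #|M|%:R)]].

(* If the event fails for some X and Y, take a maximum matching M between them:
   it has fewer than delta n / 2 edges, so X and Y each keep more than
   delta n / 2 vertices outside M, and maximality forbids any edge between
   these leftovers.  For fixed disjoint A, B of that size, no edge joins them
   with probability (1 - p)^(|A||B|) <= exp (- p (delta n / 2)^2), which is at
   most e^(-4n) once n p >= 16 / delta^2.  A union bound over the 4^n pairs
   (A, B) bounds the failure probability by (4 e^(-4))^n <= (4/5)^n. *)

From HB Require Import structures.
From mathcomp Require Import all_boot all_order all_algebra.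
From mathcomp Require Import all_classical all_reals all_analysis.
(* Re-imported so that set0, cover, subsetP, ... refer to finite sets rather
   than to their classical_sets homonyms. *)
From mathcomp Require Import fintype finset ring lra.
Set Implicit Arguments.
Unset Strict Implicit.
Unset Printing Implicit Defensive.

Import Order.TTheory GRing.Theory Num.Theory.
Import numFieldNormedType.Exports.
Local Open Scope ring_scope.

Lemma sum_powerset_prod (T : finType) (R : comPzSemiRingType) (a b : T -> R)
    (S : {set T}) :
  \sum_(E in powerset S) (\prod_(x in E) a x * \prod_(x in S :\: E) b x)
  = \prod_(x in S) (a x + b x).
Proof.
move: {2}#|S| (erefl #|S|) => k; elim: k S => [|k IH] S cardS.
  move/eqP: cardS; rewrite cards_eq0 => /eqP ->.
  by rewrite powerset0 big_set1 !big_set0 setD0 big_set0 mulr1.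
have [x xS] : exists x, x \in S by apply/set0Pn; rewrite -card_gt0 cardS.
have cardSx : #|S :\ x| = k by move: cardS; rewrite (cardsD1 x S) xS => -[].
rewrite (big_setD1 x xS) /= -(IH _ cardSx) mulr_sumr.
under [RHS]eq_bigr do rewrite mulrDl.
rewrite big_split /= [LHS](bigID (fun E : {set T} => x \in E)) /=.
congr (_ + _).
- rewrite (reindex_onto (fun E => x |: E) (fun E => E :\ x)) /=; last first.
    by move=> E /andP[_ xE]; rewrite setD1K.
  apply: eq_big => [E|E].
    rewrite !powersetE setU11 andbT subsetD1 subUset sub1set xS /=.
    case xE: (x \in E); last by rewrite setU1K ?xE // eqxx andbT.
    rewrite andbF; apply/negbTE/negP => /andP[_ /eqP E_x].
    by move: xE; rewrite -E_x !inE eqxx.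
  move=> /andP[_ /eqP E_x]; have xE : x \notin E by rewrite -E_x !inE eqxx.
  rewrite big_setU1 //= mulrA; congr (_ * _).
  by apply: eq_bigl => y; rewrite !inE negb_or andbCA andbA.
- apply: eq_big => [E|E]; first by rewrite !powersetE subsetD1.
  move=> /andP[_ xE]; rewrite mulrCA; congr (_ * _).
  have xSE : x \in S :\: E by rewrite inE xE xS.
  rewrite (big_setD1 x xSE); congr (_ * _).
  by apply: eq_bigl => y; rewrite !inE andbCA.
Qed.

Section RandomGraph.
Variables (R : realType) (n : nat) (p : R).

Lemma gnp_prob_avoid (F : {set {set 'I_n}}) :
  gnp_prob p (fun E => [disjoint E & F]) = (1 - p) ^+ #|pairs n :&: F|.
Proof.
rewrite /gnp_prob; set S := pairs n.
transitivity (\sum_(E in powerset S)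
   (\prod_(e in E) (if e \in F then 0 else p) * \prod_(e in S :\: E) (1 - p))).
  rewrite big_mkcondr /=; apply: eq_bigr => E; rewrite powersetE => ES.
  case: ifPn => [EF | ]; last first.
    rewrite -setI_eq0 => /set0Pn[e]; rewrite inE => /andP[eE eF].
    by rewrite (bigD1 e) //= eF !mul0r.
  rewrite (eq_bigr (fun _ => p)) => [|e eE]; last by rewrite (disjointFr EF eE).
  by rewrite !prodr_const cardsD (setIidPr ES).
rewrite sum_powerset_prod.
rewrite (eq_bigr (fun e => if e \in F then 1 - p else 1)) => [|e _]; last first.
  by case: ifP; rewrite ?add0r // subrKC.
by rewrite -big_mkcondr /= -prodr_const; apply: eq_bigl => e; rewrite in_setI.
Qed.

Lemma gnp_prob_predT : @gnp_prob R n p predT = 1.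
Proof.
have := gnp_prob_avoid set0; rewrite setI0 cards0 expr0 => <-.
by apply: eq_bigl => E; rewrite -setI_eq0 setI0 eqxx.
Qed.

Lemma gnp_probC (A : pred {set {set 'I_n}}) :
  gnp_prob p (predC A) = 1 - gnp_prob p A.
Proof.
rewrite -gnp_prob_predT /gnp_prob.
rewrite [X in _ = X - _](eq_bigl (mem (powerset (pairs n)))) => [|E]; last exact: andbT.
by rewrite [in RHS](bigID A) /= [RHS]addrC addKr.
Qed.

Hypothesis p01 : 0 <= p <= 1.

Lemma gnp_prob_ge0 (A : pred {set {set 'I_n}}) : 0 <= gnp_prob p A.
Proof.
have [p0 p1] := andP p01.
by apply: sumr_ge0 => E _; rewrite mulr_ge0 ?exprn_ge0 ?subr_ge0.
Qed.

Lemma gnp_prob_union_bound (I : finType) (P : pred I)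
    (A : pred {set {set 'I_n}}) (B : I -> pred {set {set 'I_n}}) :
    (forall E, A E -> exists2 i, P i & B i E) ->
  gnp_prob p A <= \sum_(i | P i) gnp_prob p (B i).
Proof.
move=> AB; rewrite /gnp_prob.
under [X in _ <= X]eq_bigr do rewrite big_mkcondr.
rewrite exchange_big big_mkcondr /=; apply: ler_sum => E _.
have w0 : 0 <= p ^+ #|E| * (1 - p) ^+ (#|pairs n| - #|E|).
  by have [p0 p1] := andP p01; rewrite mulr_ge0 ?exprn_ge0 ?subr_ge0.
have sum0 (Q : pred I) : 0 <= \sum_(i | Q i) (if B i E then
    p ^+ #|E| * (1 - p) ^+ (#|pairs n| - #|E|) else 0).
  by apply: sumr_ge0 => i _; case: ifP.
case: ifP => [/AB[i Pi BiE] | _]; last exact: sum0.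
by rewrite (bigD1 i) //= BiE lerDl.
Qed.

End RandomGraph.

Lemma expr1B_le_expR (R : realType) (x : R) (k : nat) :
  x <= 1 -> (1 - x) ^+ k <= expR (- (x * k%:R)).
Proof.
move=> x1; rewrite -mulNr mulrC expRM_natl; apply: lerXn2r.
- by rewrite nnegrE subr_ge0.
- by rewrite nnegrE expR_ge0.
- exact: expR_ge1Dx.
Qed.

Lemma card_setI_cover_le (T : finType) (X : {set T}) (M : {set {set T}}) :
  {in M, forall e, #|X :&: e| <= 1}%N -> (#|X :&: cover M| <= #|M|)%N.
Proof.
move=> meet1; set P := (fun e => X :&: e) @: M.
have XM_P : X :&: cover M \subset cover P.
  apply/subsetP => z /setIP[zX /bigcupP[e eM ze]].
  by apply/bigcupP; exists (X :&: e); [apply: imset_f | rewrite inE zX].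
apply: leq_trans (subset_leq_card XM_P) _.
apply: leq_trans (leq_card_cover P).1 _.
apply: leq_trans (leq_imset_card (fun e => X :&: e) M).
by rewrite -sum1_card; apply: leq_sum => _ /imsetP[e eM ->]; apply: meet1.
Qed.

Lemma card_setI_set2_le (T : finType) (Z : {set T}) (x y : T) :
  y \notin Z -> (#|Z :&: [set x; y]| <= 1)%N.
Proof.
move=> yZ; rewrite -(cards1 x); apply/subset_leq_card/subsetP => z.
by rewrite !inE => /andP[zZ /orP[// | /eqP zy]]; rewrite -zy zZ in yZ.
Qed.

Definition cross_pairs (n : nat) (A B : {set 'I_n}) : {set {set 'I_n}} :=
  [set [set u.1; u.2] | u in setX A B].

Lemma card_cross_pairs (n : nat) (A B : {set 'I_n}) : [disjoint A & B] ->
  #|pairs n :&: cross_pairs A B| = (#|A| * #|B|)%N.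
Proof.
move=> AB; have aB a : a \in A -> a \notin B by move/(disjointFr AB)->.
have cross_pairs_sub : cross_pairs A B \subset pairs n.
  apply/subsetP => _ /imsetP[[a b] /setXP[aA bB] ->].
  have ab : a != b by apply: contraTneq bB => <-; apply: aB.
  by rewrite inE cards2 ab.
rewrite (setIidPr cross_pairs_sub) card_in_imset ?cardsX //.
move=> [a b] [a' b'] /setXP[aA bB] /setXP[aA' bB'] /= ab_eq.
have : a \in [set a'; b'] by rewrite -ab_eq !inE eqxx.
have : b \in [set a'; b'] by rewrite -ab_eq !inE eqxx orbT.
rewrite !inE => /orP[/eqP ba' | /eqP ->]; first by rewrite ba' (negbTE (aB a' aA')) in bB.
case/orP=> /eqP ab'; first by rewrite ab'.
by rewrite -ab' (negbTE (aB a aA)) in bB'.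
Qed.

Section Matchings.
Variables (n : nat) (E : {set {set 'I_n}}) (X Y : {set 'I_n}).
Hypothesis XY : [disjoint X & Y].

Lemma card_cover_XY_matching (M : {set {set 'I_n}}) : XY_matching E X Y M ->
  (#|X :&: cover M| <= #|M|)%N /\ (#|Y :&: cover M| <= #|M|)%N.
Proof.
case/and3P=> _ /forall_inP M_XY _; split; apply: card_setI_cover_le => e eM;
  have /exists_inP[x xX /exists_inP[y yY /eqP ->]] := M_XY e eM.
  by apply: card_setI_set2_le; rewrite (disjointFl XY yY).
by rewrite setUC; apply: card_setI_set2_le; rewrite (disjointFr XY xX).
Qed.

Lemma XY_matching_setU1 (M : {set {set 'I_n}}) (a b : 'I_n) :
    XY_matching E X Y M -> a \in X -> b \in Y -> [set a; b] \in E ->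
    a \notin cover M -> b \notin cover M ->
  XY_matching E X Y ([set a; b] |: M).
Proof.
case/and3P=> ME M_XY Mdisj aX bY abE aM bM.
have ab_disj e : e \in M -> [disjoint [set a; b] & e].
  move=> eM; rewrite -setI_eq0; apply/eqP/setP => z; rewrite !inE.
  apply/negP => /andP[/orP[] /eqP-> ze].
    by case/negP: aM; apply/bigcupP; exists e.
  by case/negP: bM; apply/bigcupP; exists e.
apply/and3P; split.
- by rewrite subUset sub1set abE.
- apply/forall_inP => e; rewrite in_setU1 => /predU1P[-> | eM].
    by apply/exists_inP; exists a => //; apply/exists_inP; exists b.
  exact: (forall_inP M_XY).
apply/forall_inP => e /setU1P[-> | eM]; apply/forall_inP => f /setU1P[-> | fM];
  apply/implyP => ef.
- by rewrite eqxx in ef.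
- exact: ab_disj.
- by rewrite disjoint_sym; apply: ab_disj.
- by move/forall_inP: Mdisj => /(_ e eM)/forall_inP/(_ f fM)/implyP; apply.
Qed.

Lemma maximum_XY_matching_no_cross_edge (M : {set {set 'I_n}}) :
    XY_matching E X Y M ->
    (forall M', XY_matching E X Y M' -> #|M'| <= #|M|)%N ->
  [disjoint E & cross_pairs (X :\: cover M) (Y :\: cover M)].
Proof.
move=> M_XY maxM; rewrite -setI_eq0; apply/eqP/setP => f; rewrite !inE.
apply/negP => /andP[fE /imsetP[[a b] /setXP[]]]; rewrite !inE.
move=> /andP[aM aX] /andP[bM bY] f_ab; rewrite {f}f_ab /= in fE.
have abM : [set a; b] \notin M.
  by apply: contra aM => abM; apply/bigcupP; exists [set a; b]; rewrite // !inE eqxx.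
have := maxM _ (XY_matching_setU1 M_XY aX bY fE aM bM).
by rewrite cardsU1 abM ltnn.
Qed.

End Matchings.

Definition large_disjoint_pair (R : realType) (delta : R) (n : nat)
    (u : {set 'I_n} * {set 'I_n}) : bool :=
  [&& [disjoint u.1 & u.2], delta * n%:R / 2 < #|u.1|%:R
    & delta * n%:R / 2 < #|u.2|%:R].

Lemma not_matching_event_no_cross_edge (R : realType) (delta : R) (n : nat)
    (E : {set {set 'I_n}}) :
  ~~ matching_event delta E ->
  exists2 u, large_disjoint_pair delta u & [disjoint E & cross_pairs u.1 u.2].
Proof.
case/forallPn=> X /forallPn[Y]; rewrite negb_imply.
case/andP=> /andP[/andP[XY X_large] Y_large] /existsPn noM.
have M0 : XY_matching E X Y set0.
  rewrite /XY_matching sub0set /=.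
  by apply/andP; split; apply/forall_inP => e; rewrite inE.
have [M M_XY maxM] := arg_maxnP (fun M : {set {set 'I_n}} => #|M|) M0.
have M_small : #|M|%:R < delta * n%:R / 2 by move: (noM M); rewrite M_XY ltNge.
have [XM YM] := card_cover_XY_matching XY M_XY.
have large_rest (Z : {set 'I_n}) : delta * n%:R <= #|Z|%:R ->
    (#|Z :&: cover M| <= #|M|)%N -> delta * n%:R / 2 < #|Z :\: cover M|%:R.
  move=> Z_large ZM; have := congr1 (GRing.natmul (1 : R)) (cardsID (cover M) Z).
  by rewrite natrD; move: ZM; rewrite -(ler_nat R); lra.
exists (X :\: cover M, Y :\: cover M); last exact: maximum_XY_matching_no_cross_edge.
by rewrite /large_disjoint_pair /= !large_rest ?(disjointW (subsetDl _ _) (subsetDl _ _)).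
Qed.

Lemma four_expRN4_le (R : realType) : 4 * expR (- 4) <= 4 / 5 :> R.
Proof.
have e4_ge5 : 5 <= expR (4 : R) by have := expR_ge1Dx (4 : R); lra.
by rewrite expRN ler_pdivrMr ?expR_gt0 //; lra.
Qed.

Section Threshold.
Variables (R : realType) (delta p : R) (n : nat).
Hypotheses (delta_gt0 : 0 < delta) (p01 : 0 <= p <= 1).
Hypothesis np_large : 16 / delta ^+ 2 <= n%:R * p.

Lemma gnp_prob_no_cross_edge_le (u : {set 'I_n} * {set 'I_n}) :
    large_disjoint_pair delta u ->
  gnp_prob p (fun E => [disjoint E & cross_pairs u.1 u.2]) <= expR (- 4) ^+ n.
Proof.
case/and3P=> u12 u1_large u2_large.
have [p0 p1] := andP p01.
rewrite gnp_prob_avoid card_cross_pairs // -expRM_natl.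
apply: le_trans (expr1B_le_expR _ p1) _; rewrite ler_expR natrM.
have half_ge0 : 0 <= delta * n%:R / 2 by rewrite divr_ge0 // mulr_ge0 // ltW.
have sq_le : (delta * n%:R / 2) ^+ 2 <= #|u.1|%:R * #|u.2|%:R.
  by rewrite expr2; apply: ler_pM => //; apply: ltW.
have pn_sq : p * (delta * n%:R / 2) ^+ 2 = n%:R * p * (delta ^+ 2 * n%:R / 4).
  by rewrite -!mulrA; field.
have np_sq : 4 * n%:R <= n%:R * p * (delta ^+ 2 * n%:R / 4).
  have -> : 4 * n%:R = 16 / delta ^+ 2 * (delta ^+ 2 * n%:R / 4).
    by field; rewrite gt_eqF ?exprn_gt0.
  by apply: ler_wpM2r => //; rewrite divr_ge0 // mulr_ge0 // sqr_ge0.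
have := ler_wpM2l p0 sq_le; lra.
Qed.

Lemma gnp_prob_not_matching_event_le :
  gnp_prob p (predC (@matching_event R delta n)) <= (4 / 5) ^+ n.
Proof.
apply: le_trans (gnp_prob_union_bound p01 (@not_matching_event_no_cross_edge _ delta n)) _.
apply: le_trans (ler_sum _ (fun u => @gnp_prob_no_cross_edge_le u)) _.
apply: le_trans (_ : \sum_(u : {set 'I_n} * {set 'I_n}) expR (- 4) ^+ n <= _).
  rewrite [X in _ <= X](bigID (@large_disjoint_pair R delta n)) lerDl.
  by apply: sumr_ge0 => u _; rewrite exprn_ge0 ?expR_ge0.
rewrite sumr_const card_prod -cardsT -powersetT card_powerset cardsT card_ord.
rewrite -expnMn -[X in X <= _]mulr_natr natrX -exprMn mulrC.
by apply: lerXn2r; rewrite ?nnegrE ?mulr_ge0 ?expR_ge0 //; apply: four_expRN4_le.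
Qed.
End Threshold.

Local Open Scope classical_set_scope.

Theorem claim2p8 (R : realType) (delta : R) (p : nat -> R)
  (hdelta : 0 < delta)
  (hp : forall n, 0 <= p n <= 1)
  (homega : (fun n => n%:R * p n) @ \oo --> +oo) :
  (fun n => @gnp_prob R n (p n) (@matching_event R delta n)) @ \oo --> (1 : R).
Proof.
set P := fun n => _.
have fail_cvg0 : (fun n => 1 - P n) @ \oo --> (0 : R).
  apply: (@squeeze_cvgr _ _ _ _ (fun _ => 0) (fun n => (4 / 5 : R) ^+ n)).
  - move/cvgryPge: homega => /(_ (16 / delta ^+ 2)); apply: filterS => n np_large.
    by rewrite -gnp_probC gnp_prob_ge0 ?gnp_prob_not_matching_event_le ?hp.
  - exact: cvg_cst.
  - by apply: cvg_expr; rewrite ger0_norm; lra.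
have -> : P = (fun n => 1 - (1 - P n)) by apply/funext => n; rewrite subKr.
by rewrite -[X in _ --> X]subr0; apply: cvgB => //; apply: cvg_cst.
Qed.
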